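(* If $\tau\in\mathcal{T}$ and $(\mathbb{R},\tau)$ is locally connected, then $(\mathbb{R},\tau)$ is locally compact and completely metrizable, and $\Gamma(\tau)$ is closed in the Euclidean topology. Moreover, $\Gamma(\tau)$ is countable if and only if $(\mathbb{R},\tau)$ is second countable.
   Context: $\eta$ denotes the Euclidean topology on $\mathbb{R}$; $\mathcal{T}$ is the family of all topologies on $\mathbb{R}$ finer than $\eta$. $\Gamma(\tau)=\{x\in\mathbb{R}:\mathcal{U}_\eta(x)\neq\mathcal{U}_\tau(x)\}$ where $\mathcal{U}_\tau(x)$ is the neighborhood filter of $x$ in $\tau$. *)

From Stdlib Require Import Reals List.
Open Scope R_scope.

Definition is_topology (tau : (R -> Prop) -> Prop) : Prop :=
  tau (fun _ => True) /\
  (forall F : (R -> Prop) -> Prop, (forall U, F U -> tau U) ->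
      tau (fun x => exists U, F U /\ U x)) /\
  (forall U V, tau U -> tau V -> tau (fun x => U x /\ V x)).

Definition eta : (R -> Prop) -> Prop := open_set.

Definition in_T (tau : (R -> Prop) -> Prop) : Prop :=
  is_topology tau /\ (forall U, eta U -> tau U).

Definition nbhd (tau : (R -> Prop) -> Prop) (x : R) (N : R -> Prop) : Prop :=
  exists U, tau U /\ U x /\ (forall y, U y -> N y).

Definition Gamma (tau : (R -> Prop) -> Prop) (x : R) : Prop :=
  ~ (forall N, nbhd eta x N <-> nbhd tau x N).

Definition connected_in (tau : (R -> Prop) -> Prop) (A : R -> Prop) : Prop :=
  forall U V, tau U -> tau V ->
    (forall x, A x -> U x \/ V x) ->
    (exists x, A x /\ U x) -> (exists x, A x /\ V x) ->
    exists x, A x /\ U x /\ V x.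

Definition locally_connected (tau : (R -> Prop) -> Prop) : Prop :=
  forall x U, tau U -> U x ->
    exists V, tau V /\ V x /\ connected_in tau V /\ (forall y, V y -> U y).

Definition compact_in (tau : (R -> Prop) -> Prop) (K : R -> Prop) : Prop :=
  forall F : (R -> Prop) -> Prop, (forall U, F U -> tau U) ->
    (forall x, K x -> exists U, F U /\ U x) ->
    exists l : list (R -> Prop), (forall U, In U l -> F U) /\
      (forall x, K x -> exists U, In U l /\ U x).

Definition locally_compact (tau : (R -> Prop) -> Prop) : Prop :=
  forall x, exists K, nbhd tau x K /\ compact_in tau K.

Definition is_metric (d : R -> R -> R) : Prop :=
  (forall x y, 0 <= d x y) /\ (forall x y, d x y = 0 <-> x = y) /\
  (forall x y, d x y = d y x) /\ (forall x y z, d x z <= d x y + d y z).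

Definition metric_induces (d : R -> R -> R) (tau : (R -> Prop) -> Prop) : Prop :=
  forall U, tau U <-> (forall x, U x -> exists e, 0 < e /\ forall y, d x y < e -> U y).

Definition metric_complete (d : R -> R -> R) : Prop :=
  forall u : nat -> R,
    (forall e, 0 < e -> exists N, forall m n, (N <= m)%nat -> (N <= n)%nat -> d (u m) (u n) < e) ->
    exists l, forall e, 0 < e -> exists N, forall n, (N <= n)%nat -> d (u n) l < e.

Definition completely_metrizable (tau : (R -> Prop) -> Prop) : Prop :=
  exists d, is_metric d /\ metric_induces d tau /\ metric_complete d.

Definition countable_set (A : R -> Prop) : Prop :=
  exists f : nat -> R, forall x, A x -> exists n, f n = x.

Definition second_countable (tau : (R -> Prop) -> Prop) : Prop :=
  exists B : nat -> (R -> Prop), (forall n, tau (B n)) /\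
    (forall U x, tau U -> U x -> exists n, B n x /\ (forall y, B n y -> U y)).

(* Since tau refines the Euclidean topology, tau-connected sets are intervals.
   A connected tau-open set V containing x either reaches past x on a given side,
   or V together with the opposite half-line and the open half-line beyond x split
   the line, so the component of x stops at x.  Hence near x the component of x is
   a closed interval contained in V, and tau agrees with the Euclidean topology on
   V.  This yields compact neighbourhoods by Heine-Borel, and shows that a point
   strictly between two points of a connected open set is Euclidean: the
   complement of Gamma is open, and each point of Gamma is the least or greatest
   element of every basic open set inside a connected neighbourhood, so a
   countable base makes Gamma countable.  Conversely, small connected
   neighbourhoods of the points of Gamma together with intervals with rational
   endpoints form a countable base.  Finally, if D x is the distance (capped at 1)
   from x to the endpoints missing from its component, then
   |x - y| + [x, y lie in different components] + |1/D x - 1/D y|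
   is a complete metric inducing tau. *)

From Stdlib Require Import Reals List Lra Lia ZArith Cantor.
From Stdlib Require Import Classical ClassicalEpsilon FunctionalExtensionality PropExtensionality.
Open Scope R_scope.

Lemma eta_intro (U : R -> Prop) :
  (forall x, U x -> exists e, 0 < e /\ forall y, Rabs (y - x) < e -> U y) -> eta U.
Proof.
  intros H x Hx. destruct (H x Hx) as [e [He HU]].
  exists (mkposreal e He). exact HU.
Qed.

Lemma eta_ball x e : eta (fun y => Rabs (y - x) < e).
Proof.
  apply eta_intro. intros y Hy. exists (e - Rabs (y - x)). split; [lra|].
  intros z Hz. pose proof (Rabs_triang (z - y) (y - x)).
  replace (z - y + (y - x)) with (z - x) in * by ring. lra.
Qed.

Lemma eta_lt c : eta (fun y => y < c).
Proof.
  apply eta_intro. intros y Hy. exists (c - y). split; [lra|].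
  intros z Hz. apply Rabs_def2 in Hz. lra.
Qed.

Lemma eta_gt c : eta (fun y => c < y).
Proof.
  apply eta_intro. intros y Hy. exists (y - c). split; [lra|].
  intros z Hz. apply Rabs_def2 in Hz. lra.
Qed.

Lemma Rinv_close a e : 0 < a -> 0 < e ->
  exists d, 0 < d /\ forall b, Rabs (a - b) < d -> Rabs (/ a - / b) < e.
Proof.
  intros Ha He. exists (Rmin (a / 2) (e * a * a / 4)). split.
  { apply Rmin_glb_lt; [lra|]. assert (0 < e * a) by (apply Rmult_lt_0_compat; lra). nra. }
  intros b Hab. pose proof (Rmin_l (a / 2) (e * a * a / 4)).
  pose proof (Rmin_r (a / 2) (e * a * a / 4)). apply Rabs_def2 in Hab.
  assert (Hb : a / 2 < b) by lra.
  assert (Hab' : 0 < a * b) by (apply Rmult_lt_0_compat; lra).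
  replace (/ a - / b) with ((b - a) / (a * b)) by (field; lra).
  unfold Rdiv. rewrite Rabs_mult, Rabs_inv, (Rabs_pos_eq (a * b)) by lra.
  apply (Rmult_lt_reg_r (a * b)); [lra|].
  rewrite Rmult_assoc, Rinv_l, Rmult_1_r by lra.
  assert (0 < e * a) by (apply Rmult_lt_0_compat; lra).
  apply Rabs_def1; nra.
Qed.

Lemma inv_INR_S_lt e : 0 < e -> exists k, / INR (S k) < e.
Proof.
  intro He. destruct (archimed_cor1 e He) as [[|k] [Hk HN]]; [lia|]. exists k. exact Hk.
Qed.

(* [INR a - INR b] ranges over all integers as [a], [b] range over [nat]. *)
Lemma grid_point_near x m : 0 < m ->
  exists a b : nat, Rabs (x - (INR a - INR b) / m) < / m.
Proof.
  intro Hm. set (z := (up (x * m) - 1)%Z).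
  exists (Z.to_nat z), (Z.to_nat (- z)).
  replace (INR (Z.to_nat z) - INR (Z.to_nat (- z))) with (IZR z)
    by (rewrite !INR_IZR_INZ, <- minus_IZR; f_equal; lia).
  destruct (archimed (x * m)) as [Hup1 Hup2].
  assert (Hz : IZR z = IZR (up (x * m)) - 1) by (unfold z; rewrite minus_IZR; reflexivity).
  replace (x - IZR z / m) with ((x * m - IZR z) / m) by (field; lra).
  unfold Rdiv. rewrite Rabs_mult, Rabs_inv, (Rabs_pos_eq m) by lra.
  rewrite <- (Rmult_1_l (/ m)) at 2. apply Rmult_lt_compat_r.
  - apply Rinv_0_lt_compat, Hm.
  - apply Rabs_def1; lra.
Qed.

Definition least_elt (B : R -> Prop) : R :=
  epsilon (inhabits 0) (fun y => B y /\ forall z, B z -> y <= z).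

Definition greatest_elt (B : R -> Prop) : R :=
  epsilon (inhabits 0) (fun y => B y /\ forall z, B z -> z <= y).

Lemma least_elt_eq B g : B g -> (forall z, B z -> g <= z) -> least_elt B = g.
Proof.
  intros Bg Hg. unfold least_elt.
  destruct (epsilon_spec (inhabits 0) (fun y => B y /\ forall z, B z -> y <= z))
    as [By Hy]; [eauto|].
  apply Rle_antisym; auto.
Qed.

Lemma greatest_elt_eq B g : B g -> (forall z, B z -> z <= g) -> greatest_elt B = g.
Proof.
  intros Bg Hg. unfold greatest_elt.
  destruct (epsilon_spec (inhabits 0) (fun y => B y /\ forall z, B z -> z <= y))
    as [By Hy]; [eauto|].
  apply Rle_antisym; auto.
Qed.

Section RefinedLine.

Variable tau : (R -> Prop) -> Prop.
Hypothesis tau_T : in_T tau.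

Lemma tau_ext U V : tau U -> (forall z, U z <-> V z) -> tau V.
Proof.
  intros HU E. replace V with U; [exact HU|].
  apply functional_extensionality. intro z. apply propositional_extensionality, E.
Qed.

Lemma tau_full : tau (fun _ => True).
Proof. destruct tau_T as [[? [? ?]] ?]; auto. Qed.

Lemma tau_of_eta U : eta U -> tau U.
Proof. destruct tau_T as [[? [? ?]] ?]; auto. Qed.

Lemma tau_and U V : tau U -> tau V -> tau (fun x => U x /\ V x).
Proof. destruct tau_T as [[? [? ?]] ?]; auto. Qed.

Lemma tau_of_local U :
  (forall x, U x -> exists W, tau W /\ W x /\ forall y, W y -> U y) -> tau U.
Proof.
  intro H. apply tau_ext with (fun x => exists W, (tau W /\ forall y, W y -> U y) /\ W x).
  - destruct tau_T as [[_ [Hunion _]] _]. apply Hunion. intros W [HW _]. exact HW.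
  - intro z. split.
    + intros [W [[_ HWU] Wz]]. auto.
    + intro Uz. destruct (H z Uz) as [W [HW [Wz HWU]]]. eauto.
Qed.

Lemma tau_or U V : tau U -> tau V -> tau (fun x => U x \/ V x).
Proof.
  intros HU HV. apply tau_of_local. intros x [Ux|Vx]; [exists U|exists V]; auto.
Qed.

Definition same_component x y := exists A, connected_in tau A /\ A x /\ A y.

Lemma connected_convex A a b c :
  connected_in tau A -> A a -> A b -> a <= c <= b -> A c.
Proof.
  intros HA Aa Ab Hc. apply NNPP. intro NAc.
  destruct (HA (fun y => y < c) (fun y => c < y)) as [z [_ [Hzc Hcz]]].
  - apply tau_of_eta, eta_lt.
  - apply tau_of_eta, eta_gt.
  - intros x Ax. destruct (Rtotal_order x c) as [H|[->|H]]; tauto.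
  - exists a. split; [exact Aa|]. destruct (Req_dec a c) as [->|]; [contradiction|lra].
  - exists b. split; [exact Ab|]. destruct (Req_dec b c) as [->|]; [contradiction|lra].
  - lra.
Qed.

Lemma connected_union A B p : connected_in tau A -> connected_in tau B -> A p -> B p ->
  connected_in tau (fun z => A z \/ B z).
Proof.
  intros HA HB Ap Bp U V HU HV Hcov [u [Hu Uu]] [v [Hv Vv]].
  apply NNPP. intro Hsep.
  assert (Hpart : forall C, connected_in tau C -> (forall z, C z -> A z \/ B z) ->
            forall x y, C x -> C y -> U x -> V y -> False).
  { intros C HC HCsub x y Cx Cy Ux Vy.
    destruct (HC U V HU HV (fun z Cz => Hcov z (HCsub z Cz))) as [z [Cz [Uz Vz]]];
      [eauto|eauto|]. apply Hsep. exists z. auto. }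
  destruct (Hcov p (or_introl Ap)) as [Up|Vp].
  - destruct Hv as [Av|Bv]; [apply (Hpart A HA (fun z H => or_introl H) p v)
                              |apply (Hpart B HB (fun z H => or_intror H) p v)]; auto.
  - destruct Hu as [Au|Bu]; [apply (Hpart A HA (fun z H => or_introl H) u p)
                              |apply (Hpart B HB (fun z H => or_intror H) u p)]; auto.
Qed.

Lemma same_component_refl x : same_component x x.
Proof.
  exists (fun z => z = x). repeat split.
  intros U V _ _ _ [a [-> Ua]] [b [-> Vb]]. eauto.
Qed.

Lemma same_component_sym x y : same_component x y -> same_component y x.
Proof. intros [A [HA [Ax Ay]]]. exists A; auto. Qed.

Lemma same_component_trans x y z :
  same_component x y -> same_component y z -> same_component x z.
Proof.
  intros [A [HA [Ax Ay]]] [B [HB [By Bz]]].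
  exists (fun w => A w \/ B w). split; [exact (connected_union A B y HA HB Ay By)|auto].
Qed.

Lemma not_same_component_of_split U O x y :
  tau U -> tau O -> (forall z, U z \/ O z) -> (forall z, U z -> O z -> False) ->
  U x -> O y -> ~ same_component x y.
Proof.
  intros HU HO Hcov Hdisj Ux Oy [A [HA [Ax Ay]]].
  destruct (HA U O HU HO (fun z _ => Hcov z)) as [z [_ [Uz Oz]]]; eauto.
Qed.

Lemma connected_open_right_end V x : tau V -> V x -> connected_in tau V ->
  exists q r, x <= q /\ 0 < r /\ (forall z, x <= z <= q -> V z) /\
    (forall z, same_component x z -> x <= z < x + r -> z <= q).
Proof.
  intros HV Vx CV.
  destruct (classic (exists p, V p /\ x < p)) as [[p [Vp Hxp]]|Hnone].
  - exists p, (p - x). repeat split; [lra|lra| |].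
    + intros z Hz. exact (connected_convex V x p z CV Vx Vp Hz).
    + intros z _ Hz. lra.
  - exists x, 1. repeat split; [lra|lra| |].
    + intros z Hz. replace z with x by lra. exact Vx.
    + intros z Hxz _. apply Rnot_lt_le. intro Hlt.
      refine (not_same_component_of_split (fun y => V y \/ y < x) (fun y => x < y)
                x z _ _ _ _ (or_introl Vx) Hlt Hxz).
      * apply tau_or; [exact HV|apply tau_of_eta, eta_lt].
      * apply tau_of_eta, eta_gt.
      * intro y. destruct (Rtotal_order y x) as [H|[->|H]]; auto.
      * intros y [Vy|Hy] Hy'; [apply Hnone; eauto|lra].
Qed.

Lemma connected_open_left_end V x : tau V -> V x -> connected_in tau V ->
  exists p r, p <= x /\ 0 < r /\ (forall z, p <= z <= x -> V z) /\
    (forall z, same_component x z -> x - r < z <= x -> p <= z).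
Proof.
  intros HV Vx CV.
  destruct (classic (exists p, V p /\ p < x)) as [[p [Vp Hpx]]|Hnone].
  - exists p, (x - p). repeat split; [lra|lra| |].
    + intros z Hz. exact (connected_convex V p x z CV Vp Vx Hz).
    + intros z _ Hz. lra.
  - exists x, 1. repeat split; [lra|lra| |].
    + intros z Hz. replace z with x by lra. exact Vx.
    + intros z Hxz _. apply Rnot_lt_le. intro Hlt.
      refine (not_same_component_of_split (fun y => V y \/ x < y) (fun y => y < x)
                x z _ _ _ _ (or_introl Vx) Hlt Hxz).
      * apply tau_or; [exact HV|apply tau_of_eta, eta_gt].
      * apply tau_of_eta, eta_lt.
      * intro y. destruct (Rtotal_order y x) as [H|[->|H]]; auto.
      * intros y [Vy|Hy] Hy'; [apply Hnone; eauto|lra].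
Qed.

Lemma component_near_connected_open V x : tau V -> V x -> connected_in tau V ->
  exists p q r, p <= x <= q /\ 0 < r /\ (forall z, p <= z <= q -> V z) /\
    (forall z, same_component x z -> Rabs (z - x) < r -> p <= z <= q).
Proof.
  intros HV Vx CV.
  destruct (connected_open_left_end V x HV Vx CV) as [p [r1 [Hp [Hr1 [Lin Lout]]]]].
  destruct (connected_open_right_end V x HV Vx CV) as [q [r2 [Hq [Hr2 [Rin Rout]]]]].
  pose proof (Rmin_l r1 r2). pose proof (Rmin_r r1 r2).
  exists p, q, (Rmin r1 r2). split; [lra|]. split; [apply Rmin_glb_lt; lra|]. split.
  - intros z Hz. destruct (Rle_lt_dec z x); [apply Lin|apply Rin]; lra.
  - intros z Kxz Hz. apply Rabs_def2 in Hz.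
    destruct (Rle_lt_dec z x); [split; [apply Lout; auto; lra|lra]
                               |split; [lra|apply Rout; auto; lra]].
Qed.

Lemma connected_open_component_ball V x : tau V -> V x -> connected_in tau V ->
  exists r, 0 < r /\ forall z, same_component x z -> Rabs (z - x) < r -> V z.
Proof.
  intros HV Vx CV.
  destruct (component_near_connected_open V x HV Vx CV) as [p [q [r [_ [Hr [Hin Hout]]]]]].
  exists r. split; [exact Hr|]. intros z Kxz Hz. apply Hin, Hout; assumption.
Qed.

Definition euclidean_at x :=
  forall W, tau W -> W x -> exists e, 0 < e /\ forall z, Rabs (z - x) < e -> W z.

Lemma not_Gamma_iff_euclidean_at x : ~ Gamma tau x <-> euclidean_at x.
Proof.
  split.
  - intros HG W HW Wx. apply NNPP in HG.
    destruct (proj2 (HG W)) as [U [HU [Ux HUW]]]; [exists W; auto|].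
    destruct (HU x Ux) as [[d Hd] Hball]. exists d. split; [exact Hd|].
    intros z Hz. apply HUW, Hball, Hz.
  - intros HE HG. apply HG. intro N. split.
    + intros [U [HU [Ux HUN]]]. exists U. auto using tau_of_eta.
    + intros [U [HU [Ux HUN]]]. destruct (HE U HU Ux) as [e [He Hball]].
      exists (fun z => Rabs (z - x) < e). split; [apply eta_ball|].
      rewrite Rminus_diag, Rabs_R0. auto.
Qed.

Section LocallyConnected.

Hypothesis tau_lc : locally_connected tau.

Lemma connected_open_nbhd x : exists V, tau V /\ V x /\ connected_in tau V.
Proof.
  destruct (tau_lc x (fun _ => True) tau_full I) as [V [HV [Vx [CV _]]]]. eauto.
Qed.

Lemma open_contains_connected_ball V W y : tau V -> connected_in tau V -> V y ->
  tau W -> W y -> exists d, 0 < d /\ forall z, V z -> Rabs (z - y) < d -> W z.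
Proof.
  intros HV CV Vy HW Wy.
  destruct (tau_lc y W HW Wy) as [V' [HV' [V'y [CV' HV'W]]]].
  destruct (connected_open_component_ball V' y HV' V'y CV') as [d [Hd Hball]].
  exists d. split; [exact Hd|]. intros z Vz Hz. apply HV'W, Hball; [exists V; auto|exact Hz].
Qed.

Lemma euclidean_at_between V p q y : tau V -> connected_in tau V -> V p -> V q ->
  p < y < q -> euclidean_at y.
Proof.
  intros HV CV Vp Vq Hy W HW Wy.
  assert (Vy : V y) by (apply (connected_convex V p q y); auto; lra).
  destruct (open_contains_connected_ball V W y HV CV Vy HW Wy) as [d [Hd HdW]].
  pose proof (Rmin_l d (Rmin (y - p) (q - y))). pose proof (Rmin_r d (Rmin (y - p) (q - y))).
  pose proof (Rmin_l (y - p) (q - y)). pose proof (Rmin_r (y - p) (q - y)).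
  exists (Rmin d (Rmin (y - p) (q - y))). split; [repeat apply Rmin_glb_lt; lra|].
  intros z Hz. apply HdW; [|lra]. apply Rabs_def2 in Hz.
  apply (connected_convex V p q z); auto; lra.
Qed.

Lemma Gamma_closed : closed_set (Gamma tau).
Proof.
  apply eta_intro. intros x Hx. apply not_Gamma_iff_euclidean_at in Hx.
  destruct (connected_open_nbhd x) as [V [HV [Vx CV]]].
  destruct (Hx V HV Vx) as [e [He HeV]].
  exists (e / 2). split; [lra|]. intros y Hy. apply Rabs_def2 in Hy.
  apply (not_Gamma_iff_euclidean_at y), (euclidean_at_between V (y - e / 2) (y + e / 2));
    auto; try lra; apply HeV, Rabs_def1; lra.
Qed.

Lemma closed_interval_compact p q :
  (forall y W, p <= y <= q -> tau W -> W y ->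
     exists d, 0 < d /\ forall z, p <= z <= q -> Rabs (z - y) < d -> W z) ->
  compact_in tau (fun z => p <= z <= q).
Proof.
  intros Hloc F HF Hcov.
  assert (Hpick : forall y, exists Ud : (R -> Prop) * R, p <= y <= q ->
            F (fst Ud) /\ 0 < snd Ud /\
            forall z, p <= z <= q -> Rabs (z - y) < snd Ud -> fst Ud z).
  { intro y. destruct (classic (p <= y <= q)) as [Hy|Hy]; [|exists ((fun _ => True), 1); tauto].
    destruct (Hcov y Hy) as [U [FU Uy]].
    destruct (Hloc y U Hy (HF U FU) Uy) as [d [Hd HdU]].
    exists (U, d). auto. }
  destruct (choice _ Hpick) as [G HG].
  set (cover := fun y z => p <= y <= q /\ Rabs (z - y) < snd (G y)).
  destruct (compact_P3 p q (mkfamily (fun y => exists z, cover y z) cover (fun y H => H)))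
    as [D [HD [l Hl]]].
  - split.
    + intros x Hx. exists x. split; [exact Hx|].
      rewrite Rminus_diag, Rabs_R0. apply (HG x Hx).
    + intro y. apply eta_intro. intros z [Hy Hz]. exists (snd (G y) - Rabs (z - y)).
      split; [lra|]. intros w Hw. split; [exact Hy|].
      pose proof (Rabs_triang (w - z) (z - y)).
      replace (w - z + (z - y)) with (w - y) in * by ring. lra.
  - exists (map (fun y => fst (G y)) l). split.
    + intros U HU. apply in_map_iff in HU. destruct HU as [y [<- Hy]].
      apply Hl in Hy. destruct Hy as [[z [Hy _]] _]. apply (HG y Hy).
    + intros x Hx. destruct (HD x Hx) as [y [[Hy Hxy] Dy]].
      exists (fst (G y)). split.
      * apply (in_map (fun y => fst (G y))), Hl. split; [exists x; split|]; assumption.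
      * apply (HG y Hy); assumption.
Qed.

Lemma tau_locally_compact : locally_compact tau.
Proof.
  intro x. destruct (connected_open_nbhd x) as [V [HV [Vx CV]]].
  destruct (component_near_connected_open V x HV Vx CV) as [p [q [r [_ [Hr [Hin Hout]]]]]].
  exists (fun z => p <= z <= q). split.
  - exists (fun z => V z /\ Rabs (z - x) < r). split.
    { apply tau_and; [exact HV|apply tau_of_eta, eta_ball]. }
    split; [split; [exact Vx|rewrite Rminus_diag, Rabs_R0; exact Hr]|].
    intros z [Vz Hz]. apply Hout; [exists V; auto|exact Hz].
  - apply closed_interval_compact. intros y W Hy HW Wy.
    destruct (open_contains_connected_ball V W y HV CV (Hin y Hy) HW Wy) as [d [Hd HdW]].
    exists d. split; [exact Hd|]. intros z Hz. apply HdW, Hin, Hz.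
Qed.

Lemma Gamma_extreme g V (B : R -> Prop) : Gamma tau g -> tau V -> connected_in tau V ->
  (forall y, B y -> V y) -> B g ->
  (forall z, B z -> g <= z) \/ (forall z, B z -> z <= g).
Proof.
  intros Gg HV CV HBV Bg.
  destruct (classic (exists p, B p /\ p < g)) as [[p [Bp Hpg]]|Hnone]; [right|left].
  - intros z Bz. apply Rnot_lt_le. intro Hgz.
    apply (proj2 (not_Gamma_iff_euclidean_at g)); [|exact Gg].
    apply (euclidean_at_between V p z g); auto.
  - intros z Bz. apply Rnot_lt_le. intro Hzg. apply Hnone. eauto.
Qed.

Lemma countable_Gamma_of_second_countable :
  second_countable tau -> countable_set (Gamma tau).
Proof.
  intros [B [HB Hbase]].
  exists (fun m => if Nat.even m then least_elt (B (Nat.div2 m))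
                   else greatest_elt (B (Nat.div2 m))).
  intros g Gg. destruct (connected_open_nbhd g) as [V [HV [Vg CV]]].
  destruct (Hbase V g HV Vg) as [n [Bg HBV]].
  destruct (Gamma_extreme g V (B n) Gg HV CV HBV Bg) as [Hmin|Hmax].
  - exists (2 * n)%nat. rewrite Nat.even_even, Nat.div2_double.
    apply least_elt_eq; assumption.
  - exists (S (2 * n)). rewrite Nat.even_succ, Nat.odd_even, Nat.div2_succ_double.
    apply greatest_elt_eq; assumption.
Qed.

Lemma second_countable_of_two_families (B1 : nat -> nat -> R -> Prop)
  (B2 : nat -> nat -> nat -> R -> Prop) :
  (forall i k, tau (B1 i k)) -> (forall a b k, tau (B2 a b k)) ->
  (forall U x, tau U -> U x ->
     (exists i k, B1 i k x /\ forall y, B1 i k y -> U y) \/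
     (exists a b k, B2 a b k x /\ forall y, B2 a b k y -> U y)) ->
  second_countable tau.
Proof.
  intros HB1 HB2 Hbase.
  exists (fun n => let '(i, k) := Cantor.of_nat (Nat.div2 n) in
                   if Nat.even n then B1 i k
                   else let '(a, b) := Cantor.of_nat i in B2 a b k).
  split.
  - intro n. destruct (Cantor.of_nat (Nat.div2 n)) as [i k].
    destruct (Nat.even n); [|destruct (Cantor.of_nat i)]; auto.
  - intros U x HU Ux. destruct (Hbase U x HU Ux) as [[i [k H]]|[a [b [k H]]]].
    + exists (2 * Cantor.to_nat (i, k))%nat.
      rewrite Nat.div2_double, Cantor.cancel_of_to, Nat.even_even. exact H.
    + exists (S (2 * Cantor.to_nat (Cantor.to_nat (a, b), k))).
      rewrite Nat.div2_succ_double, Cantor.cancel_of_to, Nat.even_succ, Nat.odd_even,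
        Cantor.cancel_of_to.
      exact H.
Qed.

Definition conn_nbhd x : R -> Prop :=
  epsilon (inhabits (fun _ => True)) (fun V => tau V /\ V x /\ connected_in tau V).

Lemma conn_nbhd_spec x : tau (conn_nbhd x) /\ conn_nbhd x x /\ connected_in tau (conn_nbhd x).
Proof. unfold conn_nbhd. apply epsilon_spec, connected_open_nbhd. Qed.

Lemma second_countable_of_countable_Gamma :
  countable_set (Gamma tau) -> second_countable tau.
Proof.
  intros [g Hg].
  apply (second_countable_of_two_families
    (fun i k z => conn_nbhd (g i) z /\ Rabs (z - g i) < / INR (S k))
    (fun a b k z => Rabs (z - (INR a - INR b) / INR (S k)) < / INR (S k))).
  - intros i k. apply tau_and; [apply conn_nbhd_spec|apply tau_of_eta, eta_ball].
  - intros a b k. apply tau_of_eta, eta_ball.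
  - intros U x HU Ux. destruct (classic (Gamma tau x)) as [Gx|Ex]; [left|right].
    + destruct (Hg x Gx) as [i <-]. destruct (conn_nbhd_spec (g i)) as [HV [Vg CV]].
      destruct (open_contains_connected_ball _ U (g i) HV CV Vg HU Ux) as [d [Hd HdU]].
      destruct (inv_INR_S_lt d Hd) as [k Hk].
      exists i, k. split.
      * split; [exact Vg|]. rewrite Rminus_diag, Rabs_R0.
        apply Rinv_0_lt_compat, lt_0_INR. lia.
      * intros z [Vz Hz]. apply HdU; [exact Vz|lra].
    + apply not_Gamma_iff_euclidean_at in Ex. destruct (Ex U HU Ux) as [e [He HeU]].
      destruct (inv_INR_S_lt (e / 2)) as [k Hk]; [lra|].
      destruct (grid_point_near x (INR (S k))) as [a [b Hab]]; [apply lt_0_INR; lia|].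
      exists a, b, k. split; [exact Hab|].
      intros z Hz. apply HeU.
      pose proof (Rabs_triang (z - (INR a - INR b) / INR (S k)) ((INR a - INR b) / INR (S k) - x)).
      rewrite Rabs_minus_sym in Hab.
      replace (z - (INR a - INR b) / INR (S k) + ((INR a - INR b) / INR (S k) - x))
        with (z - x) in * by ring.
      lra.
Qed.

Definition frontier_point x a :=
  ~ same_component x a /\
  forall e, 0 < e -> exists z, same_component x z /\ Rabs (z - a) < e.

Lemma frontier_point_same_component x y a :
  same_component x y -> frontier_point x a -> frontier_point y a.
Proof.
  intros Kxy [Nxa Ha]. split.
  - intro Kya. apply Nxa. exact (same_component_trans x y a Kxy Kya).
  - intros e He. destruct (Ha e He) as [z [Kxz Hz]]. exists z. split; [|exact Hz].
    exact (same_component_trans y x z (same_component_sym x y Kxy) Kxz).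
Qed.

Lemma frontier_point_bounded_away x :
  exists r, 0 < r /\ forall a, frontier_point x a -> r <= Rabs (x - a).
Proof.
  destruct (connected_open_nbhd x) as [V [HV [Vx CV]]].
  destruct (component_near_connected_open V x HV Vx CV) as [p [q [r [Hx [Hr [Hin Hout]]]]]].
  exists r. split; [exact Hr|]. intros a [Nxa Ha]. apply Rnot_lt_le. intro Hxa.
  assert (Hnear : forall b, 0 < b -> exists z, Rabs (z - a) < b /\ p <= z <= q).
  { intros b Hb. destruct (Ha (Rmin b (r - Rabs (x - a)))) as [z [Kxz Hz]];
      [apply Rmin_glb_lt; lra|].
    pose proof (Rmin_l b (r - Rabs (x - a))). pose proof (Rmin_r b (r - Rabs (x - a))).
    exists z. split; [lra|]. apply Hout; [exact Kxz|].
    pose proof (Rabs_triang (z - a) (a - x)). rewrite (Rabs_minus_sym a x) in *.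
    replace (z - a + (a - x)) with (z - x) in * by ring. lra. }
  destruct (Rlt_dec a p) as [Hap|Hap].
  { destruct (Hnear (p - a)) as [z [Hz Hzpq]]; [lra|]. apply Rabs_def2 in Hz. lra. }
  destruct (Rlt_dec q a) as [Hqa|Hqa].
  { destruct (Hnear (a - q)) as [z [Hz Hzpq]]; [lra|]. apply Rabs_def2 in Hz. lra. }
  apply Nxa. exists V. split; [exact CV|]. split; [exact Vx|apply Hin; lra].
Qed.

(* [edge_dist x] is the distance, capped at 1, from [x] to the endpoints of its
   component that do not belong to it. *)
Definition edge_bound x r :=
  0 <= r <= 1 /\ forall a, frontier_point x a -> r <= Rabs (x - a).

Lemma edge_bound_bounded x : bound (edge_bound x).
Proof. exists 1. intros r [Hr _]. lra. Qed.

Lemma edge_bound_inhabited x : exists r, edge_bound x r.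
Proof. exists 0. split; [lra|]. intros a _. apply Rabs_pos. Qed.

Definition edge_dist x : R :=
  proj1_sig (completeness (edge_bound x) (edge_bound_bounded x) (edge_bound_inhabited x)).

Lemma edge_dist_lub x : is_lub (edge_bound x) (edge_dist x).
Proof. unfold edge_dist. destruct completeness as [d Hd]. exact Hd. Qed.

Lemma edge_dist_nonneg x : 0 <= edge_dist x.
Proof.
  apply (proj1 (edge_dist_lub x)). split; [lra|]. intros a _. apply Rabs_pos.
Qed.

Lemma edge_dist_le_frontier x a : frontier_point x a -> edge_dist x <= Rabs (x - a).
Proof.
  intro Ha. apply (proj2 (edge_dist_lub x)). intros r [_ Hr]. exact (Hr a Ha).
Qed.

Lemma edge_dist_pos x : 0 < edge_dist x.
Proof.
  destruct (frontier_point_bounded_away x) as [r [Hr Hfar]].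
  pose proof (Rmin_l 1 r). pose proof (Rmin_r 1 r).
  assert (Hb : edge_bound x (Rmin 1 r)).
  { split; [split; [apply Rmin_glb; lra|lra]|].
    intros a Ha. specialize (Hfar a Ha). lra. }
  pose proof (proj1 (edge_dist_lub x) _ Hb). pose proof (Rmin_glb_lt 1 r 0 Rlt_0_1 Hr). lra.
Qed.

Lemma edge_dist_le_shift x y :
  same_component x y -> edge_dist x <= edge_dist y + Rabs (x - y).
Proof.
  intro Kxy. apply (proj2 (edge_dist_lub x)). intros r [Hr Hfar].
  destruct (Rle_lt_dec r (Rabs (x - y))) as [Hle|Hlt].
  - pose proof (edge_dist_nonneg y). lra.
  - assert (Hb : edge_bound y (r - Rabs (x - y))).
    { split; [pose proof (Rabs_pos (x - y)); lra|].
      intros a Ha. pose proof (Hfar a (frontier_point_same_component y x a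
                                        (same_component_sym x y Kxy) Ha)).
      pose proof (Rabs_triang (x - y) (y - a)).
      replace (x - y + (y - a)) with (x - a) in * by ring. lra. }
    pose proof (proj1 (edge_dist_lub y) _ Hb). lra.
Qed.

Lemma edge_dist_lipschitz x y :
  same_component x y -> Rabs (edge_dist x - edge_dist y) <= Rabs (x - y).
Proof.
  intro Kxy. pose proof (edge_dist_le_shift x y Kxy) as Hxy.
  pose proof (edge_dist_le_shift y x (same_component_sym x y Kxy)) as Hyx.
  rewrite Rabs_minus_sym in Hyx. apply Rabs_le. lra.
Qed.

Lemma inv_edge_dist_close x e : 0 < e -> exists d, 0 < d /\
  forall y, same_component x y -> Rabs (x - y) < d ->
    Rabs (/ edge_dist x - / edge_dist y) < e.
Proof.
  intro He. destruct (Rinv_close (edge_dist x) e (edge_dist_pos x) He) as [d [Hd Hclose]].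
  exists d. split; [exact Hd|]. intros y Kxy Hxy.
  apply Hclose. pose proof (edge_dist_lipschitz x y Kxy). lra.
Qed.

Definition separation x y : R :=
  if excluded_middle_informative (same_component x y) then 0 else 1.

Lemma separation_same x y : same_component x y -> separation x y = 0.
Proof. intro Kxy. unfold separation. destruct excluded_middle_informative; tauto. Qed.

Lemma separation_other x y : ~ same_component x y -> separation x y = 1.
Proof. intro Nxy. unfold separation. destruct excluded_middle_informative; tauto. Qed.

Lemma separation_nonneg x y : 0 <= separation x y.
Proof. unfold separation. destruct excluded_middle_informative; lra. Qed.

Lemma separation_sym x y : separation x y = separation y x.
Proof.
  destruct (classic (same_component x y)) as [Kxy|Nxy].
  - rewrite !separation_same; [reflexivity|apply same_component_sym|]; exact Kxy.
  - rewrite !separation_other; [reflexivity| |exact Nxy].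
    intro Kyx. exact (Nxy (same_component_sym y x Kyx)).
Qed.

Lemma separation_triangle x y z : separation x z <= separation x y + separation y z.
Proof.
  pose proof (separation_nonneg x y). pose proof (separation_nonneg y z).
  destruct (classic (same_component x z)) as [Kxz|Nxz]; [rewrite (separation_same x z Kxz); lra|].
  rewrite (separation_other x z Nxz).
  destruct (classic (same_component x y)) as [Kxy|Nxy];
    [|rewrite (separation_other x y Nxy); lra].
  destruct (classic (same_component y z)) as [Kyz|Nyz];
    [|rewrite (separation_other y z Nyz); lra].
  exfalso. exact (Nxz (same_component_trans x y z Kxy Kyz)).
Qed.

(* [/ edge_dist] blows up near the missing endpoints, which keeps Cauchy
   sequences away from them. *)
Definition component_dist x y :=
  Rabs (x - y) + separation x y + Rabs (/ edge_dist x - / edge_dist y).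

Lemma component_dist_same x y : same_component x y ->
  component_dist x y = Rabs (x - y) + Rabs (/ edge_dist x - / edge_dist y).
Proof. intro Kxy. unfold component_dist. rewrite separation_same by exact Kxy. ring. Qed.

Lemma Rabs_le_component_dist x y : Rabs (x - y) <= component_dist x y.
Proof.
  unfold component_dist. pose proof (separation_nonneg x y).
  pose proof (Rabs_pos (/ edge_dist x - / edge_dist y)). lra.
Qed.

Lemma inv_edge_dist_le_component_dist x y :
  Rabs (/ edge_dist x - / edge_dist y) <= component_dist x y.
Proof.
  unfold component_dist. pose proof (separation_nonneg x y). pose proof (Rabs_pos (x - y)). lra.
Qed.

Lemma same_component_of_component_dist_lt_1 x y :
  component_dist x y < 1 -> same_component x y.
Proof.
  intro Hxy. apply NNPP. intro Nxy. unfold component_dist in Hxy.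
  rewrite separation_other in Hxy by exact Nxy.
  pose proof (Rabs_pos (x - y)). pose proof (Rabs_pos (/ edge_dist x - / edge_dist y)). lra.
Qed.

Lemma component_dist_is_metric : is_metric component_dist.
Proof.
  split; [|split; [|split]].
  - intros x y. pose proof (Rabs_le_component_dist x y). pose proof (Rabs_pos (x - y)). lra.
  - intros x y. split.
    + intro Hzero. pose proof (Rabs_le_component_dist x y). pose proof (Rabs_pos (x - y)).
      pose proof (Rle_abs (x - y)). pose proof (Rle_abs (- (x - y))).
      rewrite Rabs_Ropp in *. lra.
    + intros <-. rewrite component_dist_same by apply same_component_refl.
      rewrite !Rminus_diag, Rabs_R0. ring.
  - intros x y. unfold component_dist.
    rewrite (Rabs_minus_sym x y), (Rabs_minus_sym (/ edge_dist x)), separation_sym. reflexivity.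
  - intros x y z. unfold component_dist. pose proof (separation_triangle x y z).
    pose proof (Rabs_triang (x - y) (y - z)).
    pose proof (Rabs_triang (/ edge_dist x - / edge_dist y) (/ edge_dist y - / edge_dist z)).
    replace (x - y + (y - z)) with (x - z) in * by ring.
    replace (/ edge_dist x - / edge_dist y + (/ edge_dist y - / edge_dist z))
      with (/ edge_dist x - / edge_dist z) in * by ring.
    lra.
Qed.

Lemma component_dist_nbhd x e : 0 < e ->
  exists W, tau W /\ W x /\ forall y, W y -> component_dist x y < e.
Proof.
  intro He. destruct (inv_edge_dist_close x (e / 2)) as [d [Hd Hclose]]; [lra|].
  destruct (connected_open_nbhd x) as [V [HV [Vx CV]]].
  pose proof (Rmin_l d (e / 2)). pose proof (Rmin_r d (e / 2)).
  exists (fun y => V y /\ Rabs (y - x) < Rmin d (e / 2)). split.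
  { apply tau_and; [exact HV|apply tau_of_eta, eta_ball]. }
  split.
  { split; [exact Vx|]. rewrite Rminus_diag, Rabs_R0. apply Rmin_glb_lt; lra. }
  intros y [Vy Hy]. rewrite Rabs_minus_sym in Hy.
  assert (Kxy : same_component x y) by (exists V; auto).
  rewrite component_dist_same by exact Kxy.
  pose proof (Hclose y Kxy ltac:(lra)). lra.
Qed.

Lemma component_dist_induces : metric_induces component_dist tau.
Proof.
  intro U. split.
  - intros HU x Ux. destruct (tau_lc x U HU Ux) as [V [HV [Vx [CV HVU]]]].
    destruct (connected_open_component_ball V x HV Vx CV) as [r [Hr Hball]].
    pose proof (Rmin_l 1 r). pose proof (Rmin_r 1 r).
    exists (Rmin 1 r). split; [apply Rmin_glb_lt; lra|]. intros y Hy.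
    pose proof (Rabs_le_component_dist x y). rewrite Rabs_minus_sym in *.
    apply HVU, Hball; [apply same_component_of_component_dist_lt_1|]; lra.
  - intro Hball. apply tau_of_local. intros x Ux. destruct (Hball x Ux) as [e [He HeU]].
    destruct (component_dist_nbhd x e He) as [W [HW [Wx HWe]]].
    exists W. auto.
Qed.

Lemma limit_in_component x0 (u : nat -> R) l c N0 : 0 < c ->
  (forall n, (N0 <= n)%nat -> same_component x0 (u n) /\ c <= edge_dist (u n)) ->
  Un_cv u l -> same_component x0 l.
Proof.
  intros Hc Hu Hl. apply NNPP. intro Nl.
  assert (Hfr : frontier_point x0 l).
  { split; [exact Nl|]. intros e He. destruct (Hl e He) as [N1 HN1].
    exists (u (max N0 N1)). split; [apply Hu; lia|]. apply HN1. lia. }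
  destruct (Hl c Hc) as [N1 HN1].
  destruct (Hu (max N0 N1) ltac:(lia)) as [Kn Hcn].
  pose proof (edge_dist_le_frontier _ l (frontier_point_same_component x0 _ l Kn Hfr)).
  pose proof (HN1 (max N0 N1) ltac:(lia)). unfold Rdist in *.
  rewrite Rabs_minus_sym in *. lra.
Qed.

Lemma component_dist_complete : metric_complete component_dist.
Proof.
  intros u Hu.
  destruct (R_complete u) as [l Hl].
  { intros e He. destruct (Hu e He) as [N HN]. exists N. intros n m Hn Hm. unfold Rdist.
    pose proof (HN n m Hn Hm). pose proof (Rabs_le_component_dist (u n) (u m)). lra. }
  destruct (Hu 1 Rlt_0_1) as [N0 HN0].
  set (M := / edge_dist (u N0) + 1).
  assert (HM : 1 < M) by (unfold M; pose proof (Rinv_0_lt_compat _ (edge_dist_pos (u N0))); lra).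
  assert (Htail : forall n, (N0 <= n)%nat ->
            same_component (u N0) (u n) /\ / M <= edge_dist (u n)).
  { intros n Hn. specialize (HN0 N0 n (Nat.le_refl _) Hn). split.
    - exact (same_component_of_component_dist_lt_1 _ _ HN0).
    - pose proof (inv_edge_dist_le_component_dist (u N0) (u n)) as Hinv.
      pose proof (edge_dist_pos (u n)) as Hpos.
      assert (Hlt : / edge_dist (u n) < M).
      { unfold M. assert (Habs : Rabs (/ edge_dist (u N0) - / edge_dist (u n)) < 1) by lra.
        apply Rabs_def2 in Habs. lra. }
      rewrite <- (Rinv_inv (edge_dist (u n))). left. apply Rinv_lt_contravar; [|exact Hlt].
      apply Rmult_lt_0_compat; [apply Rinv_0_lt_compat|]; lra. }
  assert (Kl : same_component (u N0) l).
  { apply (limit_in_component (u N0) u l (/ M) N0); [apply Rinv_0_lt_compat; lra|exact Htail|exact Hl]. }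
  exists l. intros e He.
  destruct (inv_edge_dist_close l (e / 2)) as [d [Hd Hclose]]; [lra|].
  destruct (Hl (Rmin d (e / 2))) as [N1 HN1]; [apply Rmin_glb_lt; lra|].
  pose proof (Rmin_l d (e / 2)). pose proof (Rmin_r d (e / 2)).
  exists (max N0 N1). intros n Hn.
  pose proof (HN1 n ltac:(lia)) as Hnl. unfold Rdist in Hnl.
  assert (Kln : same_component l (u n)).
  { apply (same_component_trans l (u N0)); [apply same_component_sym, Kl|apply Htail; lia]. }
  rewrite component_dist_same by exact (same_component_sym _ _ Kln).
  rewrite (Rabs_minus_sym (/ edge_dist (u n))). rewrite Rabs_minus_sym in Hnl.
  pose proof (Hclose (u n) Kln ltac:(lra)). rewrite Rabs_minus_sym in Hnl. lra.
Qed.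

End LocallyConnected.
End RefinedLine.

Theorem proposition2 (tau : (R -> Prop) -> Prop) :
  in_T tau -> locally_connected tau ->
  locally_compact tau /\ completely_metrizable tau /\ closed_set (Gamma tau) /\
  (countable_set (Gamma tau) <-> second_countable tau).
Proof.
  intros HT HL. split; [|split; [|split]].
  - exact (tau_locally_compact tau HT HL).
  - exists (component_dist tau). split; [|split].
    + apply component_dist_is_metric.
    + exact (component_dist_induces tau HT HL).
    + exact (component_dist_complete tau HT HL).
  - exact (Gamma_closed tau HT HL).
  - split.
    + exact (second_countable_of_countable_Gamma tau HT HL).
    + exact (countable_Gamma_of_second_countable tau HT HL).
Qed.
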